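(* If $s>0$ is small enough, there exist numbers $S_n,T_n$ and a point $z_0$ such that $R_n(1)=z_0$, $R_n(z_0)=1$ and $R_n'(1)R_n'(z_0)=1$ (so $\{1,z_0\}$ is a parabolic periodic orbit of period $2$ with multiplier $1$), and these can be chosen so that $\lim_{s\to0^+}S_n/s^\nu=\mu$, $\lim_{s\to0^+}T_n/s^\nu=(d_1d_n-1)\mu$ and $\lim_{s\to0^+}z_0/s^\nu=d_1d_n\mu$.
   Context: $n\ge3$ odd, $d_1,\dots,d_n$ positive integers with $\sum1/d_i<1$, $d_{\max}=\max_id_i$, $D_i=d_i+d_{i+1}$, $c_1=(d_{\max}^2s)^{1/d_1}$, $c_i=s^{1/d_i}c_{i-1}$ ($2\le i\le n-1$), $R_n(z)=\frac{S_n}{z^{d_n}}\prod_{i=1}^{n-1}(z^{D_i}-c_i^{D_i})^{(-1)^i}+T_n$, $\nu=\frac{d_n}{d_n-1}\sum_{i=1}^{n-1}\frac1{d_i}$, and $\mu=(d_1d_n)^{-d_n/(d_n-1)}d_{\max}^{2(d_n-d_1)/(d_1(d_n-1))}$. *)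

From Stdlib Require Import Reals Lra Lia.
Open Scope R_scope.

(* Indices run over 1..n; d : nat -> nat with d i = d_i for 1 <= i <= n. *)

Fixpoint dmax (d : nat -> nat) (n : nat) : nat :=
  match n with
  | O => O
  | S k => Nat.max (d (S k)) (dmax d k)
  end.

Fixpoint sumR (f : nat -> R) (m : nat) : R :=
  match m with O => 0 | S k => sumR f k + f (S k) end.
Fixpoint prodR (f : nat -> R) (m : nat) : R :=
  match m with O => 1 | S k => prodR f k * f (S k) end.

Definition Dd (d : nat -> nat) (i : nat) : nat := (d i + d (S i))%nat.

Fixpoint cc (d : nat -> nat) (n : nat) (s : R) (i : nat) : R :=
  match i with
  | O => 1
  | S k =>
      match k with
      | O => Rpower (INR (dmax d n) ^ 2 * s) (/ INR (d 1%nat))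
      | S _ => Rpower s (/ INR (d i)) * cc d n s k
      end
  end.

Definition Rfactor (d : nat -> nat) (n : nat) (s z : R) (i : nat) : R :=
  let q := z ^ (Dd d i) - (cc d n s i) ^ (Dd d i) in
  if Nat.odd i then / q else q.

Definition Rn (d : nat -> nat) (n : nat) (s Sn Tn z : R) : R :=
  Sn / z ^ (d n) * prodR (Rfactor d n s z) (n - 1) + Tn.

Definition nu (d : nat -> nat) (n : nat) : R :=
  INR (d n) / (INR (d n) - 1) * sumR (fun i => / INR (d i)) (n - 1).

Definition mu (d : nat -> nat) (n : nat) : R :=
  Rpower (INR (d 1%nat) * INR (d n)) (- (INR (d n) / (INR (d n) - 1))) *
  Rpower (INR (dmax d n))
    (2 * (INR (d n) - INR (d 1%nat)) / (INR (d 1%nat) * (INR (d n) - 1))).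

From Stdlib Require Import Reals ZArith Lra Lia ClassicalEpsilon.
Open Scope R_scope.

(* Put z0 = s^nu w and c_i = Mp s^(sig_i), sig_i = 1/d_1 + ... + 1/d_i.  Two telescoping
   identities show that P(z) = prod_i (z^D_i - c_i^D_i)^((-1)^i) factors on this scale as
   Kc (s^nu)^(d_n - 1) Pnorm(s, w), where Pnorm -> 1 because nu > sig_i for i < n.
   For any target z0 the equations R(1) = z0, R(z0) = 1 are linear in (S, T) and fix
   S = (z0 - 1)/(G(1) - G(z0)), T = z0 - S G(1), with G(z) = P(z)/z^d_n.  Logarithmic
   differentiation turns the multiplier condition R'(1) R'(z0) = 1 into Psi(s, w) = 0 for
   an explicit Psi continuous in w, and Psi(s, w) -> Kc (d_1 d_n w^(d_n-1) - Kc) as s -> 0,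
   which changes sign at w = wstar = d_1 d_n mu.  The intermediate value theorem gives
   roots in every neighbourhood of wstar for all small s, and a diagonal selection
   produces roots w(s) -> wstar, from which the three limits follow. *)

Lemma sumR_ext (f g : nat -> R) m :
  (forall i, (1 <= i <= m)%nat -> f i = g i) -> sumR f m = sumR g m.
Proof. induction m; intros H; simpl; auto.
  rewrite IHm by (intros; apply H; lia). rewrite H by lia. reflexivity. Qed.

Lemma prodR_ext (f g : nat -> R) m :
  (forall i, (1 <= i <= m)%nat -> f i = g i) -> prodR f m = prodR g m.
Proof. induction m; intros H; simpl; auto.
  rewrite IHm by (intros; apply H; lia). rewrite H by lia. reflexivity. Qed.

Lemma prodR_mult (f g : nat -> R) m :
  prodR (fun i => f i * g i) m = prodR f m * prodR g m.
Proof. induction m; simpl; [ring|]. rewrite IHm. ring. Qed.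

Lemma sumR_scal (a : R) (f : nat -> R) m :
  sumR (fun i => a * f i) m = a * sumR f m.
Proof. induction m; simpl; [ring|]. rewrite IHm. ring. Qed.

Lemma sumR_zero m : sumR (fun _ => 0) m = 0.
Proof. induction m; simpl; [|rewrite IHm]; ring. Qed.

Lemma prodR_one m : prodR (fun _ => 1) m = 1.
Proof. induction m; simpl; [|rewrite IHm]; ring. Qed.

Lemma Rpower_pos x a : 0 < Rpower x a. Proof. unfold Rpower; apply exp_pos. Qed.

Lemma prodR_Rpower (X : R) (f : nat -> R) m : 0 < X ->
  prodR (fun i => Rpower X (f i)) m = Rpower X (sumR f m).
Proof. intros HX. induction m; simpl. rewrite Rpower_O; auto.
  rewrite IHm, Rpower_plus. reflexivity. Qed.

Lemma prodR_le (f g : nat -> R) m :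
  (forall i, (1 <= i <= m)%nat -> 0 <= f i <= g i) -> 0 <= prodR f m <= prodR g m.
Proof. induction m; intros H; simpl. lra.
  destruct IHm as [A B]. intros; apply H; lia.
  assert (C := H (S m) ltac:(lia)).
  split. apply Rmult_le_pos; lra. apply Rmult_le_compat; lra. Qed.

Lemma sumR_term_le (f : nat -> R) m i :
  (forall j, (1 <= j <= m)%nat -> 0 <= f j) -> (1 <= i <= m)%nat -> f i <= sumR f m.
Proof. induction m; intros H Hi. lia. simpl.
  assert (Hs : 0 <= sumR f m).
  { clear IHm Hi. induction m. simpl; lra. simpl.
    assert (0 <= f (S m)) by (apply H; lia).
    assert (0 <= sumR f m) by (apply IHm; intros; apply H; lia). lra. }
  destruct (Nat.eq_dec i (S m)) as [->|Hne]. lra.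
  assert (f i <= sumR f m) by (apply IHm; [intros; apply H; lia| lia]).
  assert (0 <= f (S m)) by (apply H; lia). lra. Qed.

Lemma odd_2k j : Nat.odd (2*j) = false.
Proof. induction j. reflexivity. replace (2 * S j)%nat with (S (S (2*j))) by lia. exact IHj. Qed.

Lemma odd_S2k j : Nat.odd (S (2*j)) = true.
Proof. induction j. reflexivity. replace (S (2 * S j))%nat with (S (S (S (2*j)))) by lia. exact IHj. Qed.

Lemma odd_SS2k j : Nat.odd (S (S (2*j))) = false.
Proof. exact (odd_2k j). Qed.

Lemma lim_ext (f g : R -> R) D l x0 :
  (forall x, D x -> f x = g x) -> limit1_in f D l x0 -> limit1_in g D l x0.
Proof. intros E H eps Heps. destruct (H eps Heps) as [a [Ha Hb]].
  exists a; split; auto. intros x [Dx Hx]. rewrite <- E by auto. apply Hb; auto. Qed.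

Lemma lim_val (f : R -> R) D l l' x0 : limit1_in f D l x0 -> l = l' -> limit1_in f D l' x0.
Proof. intros H ->; exact H. Qed.

Lemma lim_const (c : R) D x0 : limit1_in (fun _ => c) D c x0.
Proof. intros eps Heps. exists 1; split; [lra|]. intros x _. simpl. unfold R_dist.
  replace (c - c) with 0 by ring. rewrite Rabs_R0; lra. Qed.

Lemma lim_id D x0 : limit1_in (fun x => x) D x0 x0.
Proof. intros eps Heps. exists eps; split; [lra|]. intros x [_ H]. exact H. Qed.

Lemma lim_pow (f : R -> R) D l x0 k :
  limit1_in f D l x0 -> limit1_in (fun x => f x ^ k) D (l ^ k) x0.
Proof. intros H. induction k; simpl. apply lim_const. apply limit_mul; auto. Qed.

Lemma lim_sumR (f : nat -> R -> R) (l : nat -> R) D x0 m :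
  (forall i, (1 <= i <= m)%nat -> limit1_in (f i) D (l i) x0) ->
  limit1_in (fun x => sumR (fun i => f i x) m) D (sumR l m) x0.
Proof. induction m; intros H; simpl. apply lim_const.
  apply limit_plus. apply IHm; intros; apply H; lia. apply H; lia. Qed.

Lemma lim_prodR (f : nat -> R -> R) (l : nat -> R) D x0 m :
  (forall i, (1 <= i <= m)%nat -> limit1_in (f i) D (l i) x0) ->
  limit1_in (fun x => prodR (fun i => f i x) m) D (prodR l m) x0.
Proof. induction m; intros H; simpl. apply lim_const.
  apply limit_mul. apply IHm; intros; apply H; lia. apply H; lia. Qed.

Lemma lim_Rpower0 (D : R -> Prop) a : 0 < a -> (forall x, D x -> 0 < x) ->
  limit1_in (fun s => Rpower s a) D 0 0.
Proof. intros Ha HD eps Heps. exists (Rpower eps (/ a)). split.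
  apply Rpower_pos.
  intros x [Dx Hx]. simpl in *. unfold R_dist in *. assert (Hx0 := HD x Dx).
  rewrite Rminus_0_r in *. rewrite Rabs_pos_eq in Hx by lra.
  rewrite Rabs_pos_eq by (left; apply Rpower_pos).
  replace eps with (Rpower (Rpower eps (/a)) a).
  apply Rlt_Rpower_l; lra.
  rewrite Rpower_mult. rewrite Rinv_l by lra. apply Rpower_1; lra. Qed.

Definition near0 (P : R -> Prop) : Prop :=
  exists del, 0 < del /\ forall s, 0 < s < del -> P s.

Lemma near0_and (P Q : R -> Prop) : near0 P -> near0 Q -> near0 (fun s => P s /\ Q s).
Proof. intros [a [Ha HP]] [b [Hb HQ]]. exists (Rmin a b). split. apply Rmin_pos; auto.
  intros s Hs. assert (Rmin a b <= a) by apply Rmin_l. assert (Rmin a b <= b) by apply Rmin_r.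
  split; [apply HP | apply HQ]; lra. Qed.

Lemma near0_impl (P Q : R -> Prop) : (forall s, 0 < s -> P s -> Q s) -> near0 P -> near0 Q.
Proof. intros H [a [Ha HP]]. exists a. split; auto. intros s Hs. apply H, HP; lra. Qed.

Lemma near0_lt (f : R -> R) l c :
  limit1_in f (fun s => 0 < s) l 0 -> l < c -> near0 (fun s => f s < c).
Proof. intros H Hl. destruct (H (c - l)) as [a [Ha Hb]]. lra.
  exists a; split; auto. intros x Hx.
  assert (Hd : R_dist (f x) l < c - l).
  { apply Hb. split. lra. simpl. unfold R_dist. rewrite Rminus_0_r, Rabs_pos_eq; lra. } unfold R_dist in Hd. apply Rabs_def2 in Hd. lra. Qed.

Lemma near0_gt (f : R -> R) l c :
  limit1_in f (fun s => 0 < s) l 0 -> c < l -> near0 (fun s => c < f s).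
Proof. intros H Hl. destruct (H (l - c)) as [a [Ha Hb]]. lra.
  exists a; split; auto. intros x Hx.
  assert (Hd : R_dist (f x) l < l - c).
  { apply Hb. split. lra. simpl. unfold R_dist. rewrite Rminus_0_r, Rabs_pos_eq; lra. } unfold R_dist in Hd. apply Rabs_def2 in Hd. lra. Qed.

Lemma dpl_ext (f g : R -> R) x l : (forall z, f z = g z) ->
  derivable_pt_lim f x l -> derivable_pt_lim g x l.
Proof. intros E H eps He. destruct (H eps He) as [del Hd]. exists del. intros h h0 hh.
  rewrite <- !E. apply Hd; auto. Qed.

Lemma dpl_val (f : R -> R) x l l' : derivable_pt_lim f x l -> l = l' -> derivable_pt_lim f x l'.
Proof. intros H ->; exact H. Qed.

Lemma dpl_inv (f : R -> R) x a : derivable_pt_lim f x a -> f x <> 0 ->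
  derivable_pt_lim (fun z => / f z) x (- a / (f x)^2).
Proof. intros H Hf.
  assert (H2 := derivable_pt_lim_div (fun _ => 1) f x 0 a (derivable_pt_lim_const 1 x) H Hf).
  eapply dpl_ext. 2: apply dpl_val with (1 := H2).
  intros z; unfold div_fct; simpl. unfold Rdiv; ring.
  unfold Rsqr. simpl. field. auto. Qed.

Lemma dpl_powc (D : nat) c x :
  derivable_pt_lim (fun z => z ^ D - c) x (INR D * x ^ pred D).
Proof. eapply dpl_val. apply (derivable_pt_lim_minus (fun z => z ^ D) (fun _ => c)).
  apply derivable_pt_lim_pow. apply derivable_pt_lim_const. ring. Qed.

(* Stage [j] uses tolerance [1/(j+1)];
   the finest solvable stage among the first [~1/s] ones is selected by choice. *)
Section Selection.
Variable P : R -> R -> Prop.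
Variable w0 : R.
Hypothesis Hnear : forall eps, 0 < eps ->
  near0 (fun s => exists w, Rabs (w - w0) <= eps /\ P s w).

Definition tol (j : nat) : R := / INR (S j).
Definition solvable (j : nat) (s : R) : Prop := exists w, Rabs (w - w0) <= tol j /\ P s w.

Lemma tol_pos j : 0 < tol j.
Proof. apply Rinv_0_lt_compat, lt_0_INR; lia. Qed.

Lemma tol_anti i j : (i <= j)%nat -> tol j <= tol i.
Proof. intros H. apply Rinv_le_contravar; [apply lt_0_INR; lia | apply le_INR; lia]. Qed.

Lemma tol_small eps : 0 < eps -> exists j, tol j < eps.
Proof. intros He. exists (Z.to_nat (up (/ eps))). unfold tol.
  destruct (archimed (/ eps)) as [A _].
  assert (Hi : 0 < / eps) by (apply Rinv_0_lt_compat; lra).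
  set (j := Z.to_nat (up (/ eps))).
  assert (B : / eps < INR (S j)).
  { unfold j. rewrite S_INR, INR_IZR_INZ, Z2Nat.id. lra. apply le_IZR. simpl. lra. }
  rewrite <- (Rinv_inv eps). apply Rinv_lt_contravar; [|exact B].
  apply Rmult_lt_0_compat; [exact Hi | apply lt_0_INR; lia]. Qed.

Fixpoint best (s : R) (N : nat) : nat :=
  match N with
  | O => O
  | S N' => if excluded_middle_informative (solvable (S N') s) then S N' else best s N'
  end.

Lemma best_solvable s N : solvable 0 s -> solvable (best s N) s.
Proof. intros H0. induction N; simpl; auto.
  destruct (excluded_middle_informative (solvable (S N) s)); auto. Qed.

Lemma best_ge s N j : (j <= N)%nat -> solvable j s -> (j <= best s N)%nat.
Proof. intros Hj Hc. induction N; simpl. lia.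
  destruct (excluded_middle_informative (solvable (S N) s)). lia.
  destruct (Nat.eq_dec j (S N)) as [->|]. contradiction. apply IHN. lia. Qed.

(* Search bound: stages up to [stages s] ~ 1/s are examined, so every fixed stage
   is examined once s is small. *)
Definition stages (s : R) : nat := Z.to_nat (up (/ s)).

Lemma stages_ge j s : 0 < s < tol j -> (j <= stages s)%nat.
Proof. intros [Hs Hsj]. unfold tol in Hsj.
  assert (Hj : 0 < INR (S j)) by (apply lt_0_INR; lia).
  assert (H1 : INR (S j) < / s).
  { rewrite <- (Rinv_inv (INR (S j))). apply Rinv_lt_contravar; auto.
    apply Rmult_lt_0_compat; auto. apply Rinv_0_lt_compat; auto. }
  destruct (archimed (/ s)) as [A _].
  assert (H2 : IZR (Z.of_nat (S j)) < IZR (up (/ s))) by (rewrite <- INR_IZR_INZ; lra).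
  apply lt_IZR in H2. unfold stages. lia. Qed.

Definition select (s : R) : R :=
  epsilon (inhabits 0) (fun w => Rabs (w - w0) <= tol (best s (stages s)) /\ P s w).

Lemma select_spec s : solvable 0 s ->
  Rabs (select s - w0) <= tol (best s (stages s)) /\ P s (select s).
Proof. intros H0. unfold select. apply epsilon_spec. apply best_solvable. auto. Qed.

Lemma select_converging : exists s0, 0 < s0 /\ exists W : R -> R,
  (forall s, 0 < s < s0 -> P s (W s)) /\ limit1_in W (fun s => 0 < s < s0) w0 0.
Proof.
  destruct (Hnear (tol 0) (tol_pos 0)) as [s0 [Hs0 H0]].
  exists s0; split; auto. exists select. split.
  - intros s Hs. apply select_spec, H0; auto.
  - intros eps Heps. destruct (tol_small eps Heps) as [j Hj].
    destruct (Hnear (tol j) (tol_pos j)) as [dj [Hdj Hcj]].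
    exists (Rmin dj (tol j)). split. apply Rmin_pos; auto; apply tol_pos.
    intros s [Hs Hsd]. simpl in Hsd |- *. unfold R_dist in *.
    rewrite Rminus_0_r, Rabs_pos_eq in Hsd by lra.
    assert (Hdj' := Rmin_l dj (tol j)). assert (Htj := Rmin_r dj (tol j)).
    assert (Hbest : (j <= best s (stages s))%nat).
    { apply best_ge. apply stages_ge; lra. apply Hcj; lra. }
    destruct (select_spec s (H0 s Hs)) as [Hw _].
    assert (H := tol_anti _ _ Hbest). lra.
Qed.
End Selection.

Section Orbit.
Variable d : nat -> nat.
Variables n k : nat.
Hypothesis hnk : n = S (2*k).
Hypothesis hk : (1 <= k)%nat.
Hypothesis hd2 : forall i, (1 <= i <= n)%nat -> (2 <= d i)%nat.

Definition mm : nat := (n - 1)%nat.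
Definition dr (i : nat) : R := INR (d i).
Definition Dr (i : nat) : R := INR (Dd d i).
(* sig i = 1/d_1 + ... + 1/d_i, so that c_i = Mp * s^(sig i). *)
Definition sig (i : nat) : R := sumR (fun j => / dr j) i.
Definition MM : R := INR (dmax d n) ^ 2.
Definition Mp : R := Rpower MM (/ dr 1).
Definition sgn (i : nat) : R := if Nat.odd i then -1 else 1.
(* dn1 = d_n - 1; Kc = d_max^(2(d_n-d_1)/d_1) is the limit constant of the product. *)
Definition dn1 : nat := (d n - 1)%nat.
Definition Kc : R := Rpower MM ((dr n - dr 1) / dr 1).
(* The limit of z0 / s^nu. *)
Definition wstar : R := dr 1 * dr n * mu d n.

Lemma mm_eq : mm = (2*k)%nat. Proof. unfold mm; lia. Qed.

Lemma dr_ge2 i : (1 <= i <= n)%nat -> 2 <= dr i.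
Proof. intros H. unfold dr. apply (le_INR 2). apply hd2; auto. Qed.

Lemma dmax_ge i : (1 <= i <= n)%nat -> (d i <= dmax d n)%nat.
Proof. assert (G : forall N, (1 <= i <= N)%nat -> (d i <= dmax d N)%nat).
  { intros N H. induction N. lia. simpl.
    destruct (Nat.eq_dec i (S N)) as [->|]. lia. specialize (IHN ltac:(lia)). lia. }
  apply G. Qed.

Lemma dmax_pos : 0 < INR (dmax d n).
Proof. assert (H := dmax_ge n ltac:(lia)). assert (H2 := hd2 n ltac:(lia)).
  apply lt_0_INR. lia. Qed.

Lemma sig_pos i : (1 <= i <= n)%nat -> 0 < sig i.
Proof. induction i; intros H. lia. change (sig (S i)) with (sig i + / dr (S i)).
  assert (0 < / dr (S i)) by (apply Rinv_0_lt_compat; assert (A := dr_ge2 (S i) H); lra).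
  destruct (Nat.eq_dec i 0) as [->|]. unfold sig; simpl; lra.
  specialize (IHi ltac:(lia)). lra. Qed.

Lemma sig_mono i j : (i <= j <= n)%nat -> sig i <= sig j.
Proof. intros H. induction j. replace i with 0%nat by lia. lra.
  destruct (Nat.eq_dec i (S j)) as [->|]. lra. change (sig (S j)) with (sig j + / dr (S j)).
  specialize (IHj ltac:(lia)).
  assert (0 < / dr (S j)) by (apply Rinv_0_lt_compat; assert (A := dr_ge2 (S j) ltac:(lia)); lra).
  lra. Qed.

Lemma drn_gt1 : 1 < dr n. Proof. assert (H := dr_ge2 n ltac:(lia)). lra. Qed.

Lemma INR_dn1 : INR dn1 = dr n - 1.
Proof. unfold dn1. rewrite minus_INR. reflexivity. assert (H := hd2 n ltac:(lia)). lia. Qed.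

Lemma dn_S : d n = S dn1.
Proof. unfold dn1. assert (A := hd2 n ltac:(lia)). lia. Qed.

(* nu = d_n/(d_n-1) * sig_(n-1) strictly exceeds every partial sum sig_i, i < n;
   this is what makes all ratios z/c_i vanish on the scale z ~ s^nu. *)
Lemma nu_gt i : (i <= mm)%nat -> sig i < nu d n.
Proof. intros Hi. change (nu d n) with (dr n / (dr n - 1) * sig mm).
  assert (H1 := sig_mono i mm ltac:(unfold mm in *; lia)).
  assert (H2 := sig_pos mm ltac:(unfold mm; lia)). assert (H3 := drn_gt1).
  assert (E : dr n / (dr n - 1) = 1 + / (dr n - 1)) by (field; lra).
  assert (0 < / (dr n - 1)) by (apply Rinv_0_lt_compat; lra).
  rewrite E. assert (0 < / (dr n - 1) * sig mm) by (apply Rmult_lt_0_compat; lra).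
  nra. Qed.

Lemma nu_pos : 0 < nu d n.
Proof. assert (H := nu_gt 1 ltac:(unfold mm; lia)). assert (H2 := sig_pos 1 ltac:(lia)). lra. Qed.

Lemma cc_eq s i : 0 < s -> (1 <= i <= n)%nat -> cc d n s i = Mp * Rpower s (sig i).
Proof. intros Hs. induction i; intros Hi. lia.
  destruct i as [|i].
  - simpl. unfold Mp, MM, sig, dr. simpl. rewrite Rplus_0_l.
    rewrite <- Rpower_mult_distr; auto. exact (pow_lt _ 2 dmax_pos).
  - change (cc d n s (S (S i))) with (Rpower s (/ INR (d (S (S i)))) * cc d n s (S i)).
    rewrite IHi by lia. change (sig (S (S i))) with (sig (S i) + / dr (S (S i))).
    rewrite Rpower_plus. unfold dr. ring. Qed.

Lemma cc_pos s i : 0 < s -> (1 <= i <= n)%nat -> 0 < cc d n s i.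
Proof. intros. rewrite cc_eq by auto. apply Rmult_lt_0_compat; apply Rpower_pos. Qed.

Lemma Dr_eq i : Dr i = dr i + dr (S i).
Proof. unfold Dr, Dd, dr. apply plus_INR. Qed.

Lemma Dd_S i : (1 <= i <= mm)%nat -> Dd d i = S (pred (Dd d i)).
Proof. intros Hi. unfold Dd. assert (A := hd2 i ltac:(unfold mm in Hi; lia)). lia. Qed.

Lemma telescope_D j : (j <= k)%nat -> sumR (fun i => sgn i * Dr i) (2*j) = dr (S (2*j)) - dr 1.
Proof. induction j; intros Hj. simpl. ring.
  replace (2 * S j)%nat with (S (S (2*j))) by lia. cbn [sumR]. rewrite IHj by lia.
  unfold sgn. rewrite odd_S2k, odd_SS2k. rewrite !Dr_eq. ring. Qed.

Lemma telescope_Dsig j : (j <= k)%nat ->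
  sumR (fun i => sgn i * Dr i * sig i) (2*j) = dr (S (2*j)) * sig (2*j).
Proof. induction j; intros Hj. simpl. unfold sig; simpl; ring.
  replace (2 * S j)%nat with (S (S (2*j))) by lia. cbn [sumR]. rewrite IHj by lia.
  unfold sgn. rewrite odd_S2k, odd_SS2k. rewrite !Dr_eq.
  change (sig (S (S (2*j)))) with (sig (S (2*j)) + / dr (S (S (2*j)))).
  change (sig (S (2*j))) with (sig (2*j) + / dr (S (2*j))).
  assert (A := dr_ge2 (S (2*j)) ltac:(lia)). assert (B := dr_ge2 (S (S (2*j))) ltac:(lia)).
  field. lra. Qed.

(* The natural scale z = s^nu * w of the periodic point. *)
Definition scale (s : R) : R := Rpower s (nu d n).
(* ypow s w i = (z/c_i)^D_i; it tends to 0, so [pfactor] tends to 1. *)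
Definition ypow (s w : R) (i : nat) : R := ((scale s * w) / cc d n s i) ^ (Dd d i).
Definition pfactor (s w : R) (i : nat) : R :=
  if Nat.odd i then / (1 - ypow s w i) else 1 - ypow s w i.
Definition Pnorm (s w : R) : R := prodR (pfactor s w) mm.
(* (z^D_i - c_i^D_i)^((-1)^i) = cfactor s i * pfactor s w i; [cfactor_abs] drops
   the sign, i.e. it is (c_i^D_i)^((-1)^i). *)
Definition cfactor (s : R) (i : nat) : R :=
  if Nat.odd i then / (- (cc d n s i ^ Dd d i)) else - (cc d n s i ^ Dd d i).
Definition cfactor_abs (s : R) (i : nat) : R :=
  if Nat.odd i then / (cc d n s i ^ Dd d i) else cc d n s i ^ Dd d i.

Lemma scale_pos s : 0 < scale s. Proof. apply Rpower_pos. Qed.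

Lemma Rfactor_split s w i : 0 < s -> (1 <= i <= n)%nat ->
  Rfactor d n s (scale s * w) i = cfactor s i * pfactor s w i.
Proof. intros Hs Hi. assert (Hc := cc_pos s i Hs Hi).
  set (c := cc d n s i) in *. set (x := scale s * w).
  assert (E : x ^ Dd d i - c ^ Dd d i = - (c ^ Dd d i) * (1 - ypow s w i)).
  { unfold ypow. fold x. fold c. replace (x ^ Dd d i) with (((x / c) * c) ^ Dd d i).
    rewrite Rpow_mult_distr. ring. f_equal. field. lra. }
  unfold Rfactor, cfactor, pfactor. fold c x. rewrite E. destruct (Nat.odd i).
  apply Rinv_mult. reflexivity. Qed.

(* The signs of the factors cancel in pairs. *)
Lemma prodR_cfactor s j : (j <= k)%nat -> prodR (cfactor s) (2*j) = prodR (cfactor_abs s) (2*j).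
Proof. induction j; intros Hj. reflexivity.
  replace (2 * S j)%nat with (S (S (2*j))) by lia. cbn [prodR]. rewrite IHj by lia.
  unfold cfactor, cfactor_abs. rewrite odd_S2k, odd_SS2k.
  rewrite Rinv_opp. ring. Qed.

Lemma cfactor_abs_eq s i : 0 < s -> (1 <= i <= n)%nat ->
  cfactor_abs s i = Rpower Mp (sgn i * Dr i) * Rpower s (sgn i * Dr i * sig i).
Proof. intros Hs Hi. assert (Hc := cc_pos s i Hs Hi).
  assert (E : cc d n s i ^ Dd d i = Rpower Mp (Dr i) * Rpower s (Dr i * sig i)).
  { rewrite <- Rpower_pow by auto. rewrite cc_eq by auto.
    rewrite <- Rpower_mult_distr by apply Rpower_pos. rewrite Rpower_mult.
    unfold Dr, sig. f_equal. f_equal. ring. }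
  unfold cfactor_abs, sgn. rewrite E. destruct (Nat.odd i).
  - rewrite Rinv_mult, <- !Rpower_Ropp. f_equal; f_equal; ring.
  - f_equal; f_equal; ring. Qed.

(* (s^nu)^(d_n - 1) = s^(d_n sig_(n-1)): the exponent produced by the telescoping. *)
Lemma scale_pow s : 0 < s -> scale s ^ dn1 = Rpower s (dr n * sig mm).
Proof. intros Hs. rewrite <- Rpower_pow by apply scale_pos. unfold scale. rewrite Rpower_mult.
  rewrite INR_dn1. change (nu d n) with (dr n / (dr n - 1) * sig mm). f_equal.
  assert (H := drn_gt1). field. lra. Qed.

Lemma prod_factorisation s w : 0 < s ->
  prodR (Rfactor d n s (scale s * w)) mm = Kc * scale s ^ dn1 * Pnorm s w.
Proof. intros Hs.
  rewrite (prodR_ext _ (fun i => cfactor s i * pfactor s w i)).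
  2:{ intros i Hi. apply Rfactor_split; auto. unfold mm in Hi. lia. }
  rewrite prodR_mult. unfold Pnorm. f_equal.
  rewrite mm_eq, prodR_cfactor by lia.
  rewrite (prodR_ext _ (fun i => Rpower Mp (sgn i * Dr i) * Rpower s (sgn i * Dr i * sig i))).
  2:{ intros i Hi. apply cfactor_abs_eq; auto. lia. }
  rewrite prodR_mult, !prodR_Rpower by (auto || apply Rpower_pos).
  rewrite telescope_D, telescope_Dsig by auto. rewrite <- hnk, scale_pow, mm_eq by auto.
  f_equal. unfold Mp, Kc. rewrite Rpower_mult. f_equal. unfold Rdiv. ring. Qed.

Definition logder (s z : R) (i : nat) : R :=
  sgn i * Dr i * z ^ pred (Dd d i) / (z ^ Dd d i - cc d n s i ^ Dd d i).

Lemma Rfactor_derivative s z i : z ^ Dd d i - cc d n s i ^ Dd d i <> 0 ->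
  derivable_pt_lim (fun z => Rfactor d n s z i) z (Rfactor d n s z i * logder s z i).
Proof. intros Hq. set (c := cc d n s i ^ Dd d i) in *.
  assert (E : forall z, Rfactor d n s z i =
    if Nat.odd i then / (z ^ Dd d i - c) else z ^ Dd d i - c) by reflexivity.
  eapply dpl_ext. intros; symmetry; apply E. rewrite E. unfold logder, sgn. fold c.
  destruct (Nat.odd i).
  - eapply dpl_val. apply dpl_inv. apply dpl_powc. auto. unfold Dr. field. auto.
  - eapply dpl_val. apply dpl_powc. unfold Dr. field. auto. Qed.

Lemma prod_derivative s z m :
  (forall i, (1 <= i <= m)%nat -> z ^ Dd d i - cc d n s i ^ Dd d i <> 0) ->
  derivable_pt_lim (fun z => prodR (Rfactor d n s z) m) z
    (prodR (Rfactor d n s z) m * sumR (logder s z) m).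
Proof. induction m; intros H. simpl. eapply dpl_val. apply derivable_pt_lim_const. ring.
  cbn [prodR sumR].
  eapply dpl_val. apply (derivable_pt_lim_mult (fun z => prodR (Rfactor d n s z) m)).
  - apply IHm. intros; apply H; lia.
  - apply Rfactor_derivative. apply H; lia.
  - cbv beta. ring. Qed.

Lemma Rn_derivative s Sv T z : z <> 0 ->
  (forall i, (1 <= i <= mm)%nat -> z ^ Dd d i - cc d n s i ^ Dd d i <> 0) ->
  derivable_pt_lim (fun z => Rn d n s Sv T z) z
    (Sv * (prodR (Rfactor d n s z) mm / z ^ d n) * (sumR (logder s z) mm - dr n / z)).
Proof. intros Hz H. unfold Rn.
  assert (Hp : z ^ d n <> 0) by (apply pow_nonzero; auto).
  eapply dpl_ext. intros y.
  symmetry. apply (eq_refl (Sv * / y ^ d n * prodR (Rfactor d n s y) (n - 1) + T)).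
  eapply dpl_val. apply derivable_pt_lim_plus. 2: apply derivable_pt_lim_const.
  apply (derivable_pt_lim_mult (fun y => Sv * / y ^ d n)).
  apply (derivable_pt_lim_scal (fun y => / y ^ d n)).
  apply dpl_inv. apply derivable_pt_lim_pow. auto. apply prod_derivative. exact H.
  fold mm. unfold dr. rewrite dn_S, S_INR. simpl pred. simpl pow. field.
  split; auto. rewrite dn_S in Hp. simpl in Hp. intro E; apply Hp; rewrite E; ring. Qed.

Lemma ypow_eq s w i : 0 < s -> (1 <= i <= n)%nat ->
  ypow s w i * cc d n s i ^ Dd d i = (scale s * w) ^ Dd d i.
Proof. intros Hs Hi. assert (Hc := cc_pos s i Hs Hi). unfold ypow.
  rewrite <- Rpow_mult_distr. f_equal. field. lra. Qed.

(* z * (sum of logarithmic derivatives) at z = s^nu w, in terms of the ratios ypow. *)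
Definition XS (s w : R) : R :=
  sumR (fun i => sgn i * Dr i * ypow s w i / (ypow s w i - 1)) mm.

Lemma logder_scaled s w i : 0 < s -> (1 <= i <= mm)%nat -> ypow s w i <> 1 ->
  (scale s * w) * logder s (scale s * w) i = sgn i * Dr i * ypow s w i / (ypow s w i - 1).
Proof. intros Hs Hi Hy. assert (Hin : (1 <= i <= n)%nat) by (unfold mm in Hi; lia).
  assert (Hc := cc_pos s i Hs Hin). assert (E := ypow_eq s w i Hs Hin).
  assert (HC : cc d n s i ^ Dd d i <> 0) by (apply pow_nonzero; lra).
  unfold logder. set (x := scale s * w) in *. set (C := cc d n s i ^ Dd d i) in *.
  set (y := ypow s w i) in *. rewrite (Dd_S i Hi) in E |- *. simpl in E. simpl pred. simpl pow.
  assert (Hq : y * C - C <> 0) by (intro H; apply Hy; apply (Rmult_eq_reg_r C); lra).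
  rewrite <- E. replace (x * (sgn i * Dr i * x ^ pred (Dd d i) / (y * C - C))) with
    (sgn i * Dr i * (x * x ^ pred (Dd d i)) / (y * C - C)) by (field; auto).
  rewrite <- E. field. split; auto. intro H. apply Hy. lra. Qed.

Lemma sum_logder_scaled s w : 0 < s -> 0 < w ->
  (forall i, (1 <= i <= mm)%nat -> ypow s w i <> 1) ->
  sumR (logder s (scale s * w)) mm = XS s w / (scale s * w).
Proof. intros Hs Hw Hy. assert (A := scale_pos s). assert (Hx : scale s * w <> 0) by nra.
  rewrite (sumR_ext _ (fun i => / (scale s * w) * ((scale s * w) * logder s (scale s * w) i))).
  2:{ intros i Hi. field. split; lra. }
  rewrite sumR_scal. unfold XS.
  rewrite (sumR_ext _ _ mm (fun i Hi => logder_scaled s w i Hs Hi (Hy i Hi))).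
  unfold Rdiv. ring. Qed.

(* Given a target z0 = s^nu w, the coefficients S, T are fixed by R(1) = z0 and
   R(z0) = 1; with G(z) = P(z)/z^d_n they are S = (z0-1)/(G(1)-G(z0)), T = z0 - S G(1). *)
Definition G1 (s : R) : R := prodR (Rfactor d n s 1) mm.
Definition Gz (s w : R) : R := prodR (Rfactor d n s (scale s * w)) mm / (scale s * w) ^ d n.
Definition Sf (s w : R) : R := (scale s * w - 1) / (G1 s - Gz s w).
Definition Tf (s w : R) : R := scale s * w - Sf s w * G1 s.
(* G'(1)/G(1), the logarithmic derivative of G at 1. *)
Definition L1 (s : R) : R := sumR (logder s 1) mm - dr n.
(* (G(1) - G(z0)) * z0 * w^(d_n-1): it must not vanish. *)
Definition Gdenom (s w : R) : R := G1 s * (scale s * w) * w ^ dn1 - Kc * Pnorm s w.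
(* The multiplier equation R'(1) R'(z0) = 1, cleared of denominators, reads Psi s w = 0. *)
Definition Psi (s w : R) : R :=
  (scale s * w - 1) ^ 2 * G1 s * L1 s * (XS s w - dr n) * w ^ dn1 * Kc * Pnorm s w
  - Gdenom s w ^ 2.

Definition ParabolicOrbit (s w : R) : Prop :=
  Rn d n s (Sf s w) (Tf s w) 1 = scale s * w /\
  Rn d n s (Sf s w) (Tf s w) (scale s * w) = 1 /\
  exists l1 l2 : R,
    derivable_pt_lim (fun z => Rn d n s (Sf s w) (Tf s w) z) 1 l1 /\
    derivable_pt_lim (fun z => Rn d n s (Sf s w) (Tf s w) z) (scale s * w) l2 /\
    l1 * l2 = 1.

Lemma Gz_eq s w : 0 < s -> 0 < w -> Gz s w = Kc * Pnorm s w / (scale s * w * w ^ dn1).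
Proof. intros Hs Hw. unfold Gz. rewrite prod_factorisation by auto. assert (A := scale_pos s).
  rewrite dn_S. simpl pow. rewrite Rpow_mult_distr. field.
  repeat split; try apply pow_nonzero; lra. Qed.

Lemma G1_minus_Gz s w : 0 < s -> 0 < w ->
  G1 s - Gz s w = Gdenom s w / (scale s * w * w ^ dn1).
Proof. intros Hs Hw. rewrite Gz_eq by auto. unfold Gdenom. assert (A := scale_pos s).
  field. split; [apply pow_nonzero|]; nra. Qed.

Lemma Rn_at_1 s w : Rn d n s (Sf s w) (Tf s w) 1 = scale s * w.
Proof. unfold Rn, Tf, G1. fold mm. rewrite pow1. unfold Rdiv. rewrite Rinv_1. ring. Qed.

Lemma Rn_at_z0 s w : G1 s - Gz s w <> 0 -> Rn d n s (Sf s w) (Tf s w) (scale s * w) = 1.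
Proof. intros HG. unfold Rn, Tf. fold mm.
  replace (Sf s w / (scale s * w) ^ d n * prodR (Rfactor d n s (scale s * w)) mm)
    with (Sf s w * Gz s w) by (unfold Gz, Rdiv; ring).
  unfold Sf. field. exact HG. Qed.

(* The algebra behind [Psi]: with G(z0) = Kc P/(z0 B) and the derivatives
   R'(1) = S G(1) L and R'(z0) = S G(z0) X / z0, their product is 1 exactly when
   (z0-1)^2 G(1) L X B Kc P = (G(1) z0 B - Kc P)^2. *)
Lemma multiplier_algebra z G L X B K P :
  z <> 0 -> B <> 0 -> G * z * B - K * P <> 0 ->
  (z - 1) ^ 2 * G * L * X * B * K * P = (G * z * B - K * P) ^ 2 ->
  (z - 1) / (G - K * P / (z * B)) * G * L *
  ((z - 1) / (G - K * P / (z * B)) * (K * P / (z * B)) * (X / z)) = 1.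
Proof. intros Hz HB HD E.
  transitivity ((z - 1) ^ 2 * G * L * X * B * K * P / (G * z * B - K * P) ^ 2).
  - assert (HG : G - K * P / (z * B) <> 0).
    { intro H. apply HD.
      replace (G * z * B - K * P) with ((G - K * P / (z * B)) * (z * B)) by (field; auto).
      rewrite H. ring. }
    field. repeat split; auto.
  - rewrite E. field. exact HD. Qed.

Lemma parabolic_of_root s w : 0 < s -> 0 < w ->
  (forall i, (1 <= i <= mm)%nat -> ypow s w i < 1) ->
  (forall i, (1 <= i <= mm)%nat -> 1 - cc d n s i ^ Dd d i <> 0) ->
  Gdenom s w <> 0 -> Psi s w = 0 -> ParabolicOrbit s w.
Proof. intros Hs Hw Hy Hc HV HP. assert (He := scale_pos s).
  assert (Hx : scale s * w <> 0) by nra.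
  assert (Hwp : w ^ dn1 <> 0) by (apply pow_nonzero; lra).
  assert (HG : G1 s - Gz s w <> 0).
  { rewrite G1_minus_Gz by auto. unfold Rdiv. apply Rmult_integral_contrapositive_currified; auto.
    apply Rinv_neq_0_compat; apply Rmult_integral_contrapositive_currified; auto. }
  assert (Hq1 : forall i, (1 <= i <= mm)%nat -> 1 ^ Dd d i - cc d n s i ^ Dd d i <> 0)
    by (intros i Hi; rewrite pow1; auto).
  assert (Hqz : forall i, (1 <= i <= mm)%nat -> (scale s * w) ^ Dd d i - cc d n s i ^ Dd d i <> 0).
  { intros i Hi. assert (Hin : (1 <= i <= n)%nat) by (unfold mm in Hi; lia).
    rewrite <- (ypow_eq s w i Hs Hin). assert (Hc0 := cc_pos s i Hs Hin).
    assert (0 < cc d n s i ^ Dd d i) by (apply pow_lt; lra). specialize (Hy i Hi). nra. }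
  split; [apply Rn_at_1 | split; [apply Rn_at_z0; exact HG |]].
  eexists; eexists. split; [apply Rn_derivative; [lra | exact Hq1] |].
  split; [apply Rn_derivative; [exact Hx | exact Hqz] |].
  rewrite sum_logder_scaled by (auto; intros i Hi; specialize (Hy i Hi); lra).
  fold (Gz s w). rewrite pow1, Rdiv_1_r. fold (G1 s). rewrite Rdiv_1_r. fold (L1 s).
  unfold Sf. rewrite Gz_eq by auto.
  replace (XS s w / (scale s * w) - dr n / (scale s * w))
    with ((XS s w - dr n) / (scale s * w)) by (field; split; lra).
  apply multiplier_algebra; auto.
  unfold Psi, Gdenom in HP. lra. Qed.

Section Limits.
Variable D : R -> Prop.
Hypothesis HD : forall s, D s -> 0 < s.

Lemma lim_scale : limit1_in scale D 0 0.
Proof. apply lim_Rpower0; auto. apply nu_pos. Qed.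

Lemma lim_cpow i : (1 <= i <= mm)%nat -> limit1_in (fun s => cc d n s i ^ Dd d i) D 0 0.
Proof. intros Hi. assert (Hin : (1 <= i <= n)%nat) by (unfold mm in Hi; lia).
  assert (Lc : limit1_in (fun s => cc d n s i) D 0 0).
  { eapply lim_ext. intros s Ds. symmetry. apply cc_eq; auto.
    eapply lim_val. apply limit_mul. apply lim_const. apply lim_Rpower0; auto.
    apply sig_pos; auto. ring. }
  eapply lim_val. apply lim_pow, Lc. rewrite (Dd_S i Hi). simpl. ring. Qed.

(* G(1) -> 1 and G'(1)/G(1) -> -d_1, since all c_i -> 0. *)
Lemma lim_G1 : limit1_in G1 D 1 0.
Proof. unfold G1. eapply lim_val. apply lim_prodR with (l := fun _ => 1).
  - intros i Hi. unfold Rfactor. cbv zeta. rewrite pow1.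
    assert (L : limit1_in (fun s => 1 - cc d n s i ^ Dd d i) D 1 0).
    { eapply lim_val. apply limit_minus. apply lim_const. apply lim_cpow; auto. ring. }
    destruct (Nat.odd i); [|exact L].
    eapply lim_val. apply limit_inv. apply L. lra. apply Rinv_1.
  - apply prodR_one. Qed.

Lemma lim_L1 : limit1_in L1 D (- dr 1) 0.
Proof. unfold L1. eapply lim_val. apply limit_minus. 2: apply lim_const.
  - apply lim_sumR with (l := fun i => sgn i * Dr i).
    intros i Hi. unfold logder. rewrite !pow1.
    eapply lim_val. apply limit_mul. apply lim_const. apply limit_inv.
    eapply limit_minus. apply lim_const. apply lim_cpow; auto. lra. field.
  - rewrite mm_eq, telescope_D, <- hnk by auto. ring. Qed.

Variable W : R -> R.
Variable w0 : R.
Hypothesis HW : limit1_in W D w0 0.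

(* The ratios z/c_i vanish because nu > sig_i. *)
Lemma lim_ypow i : (1 <= i <= mm)%nat -> limit1_in (fun s => ypow s (W s) i) D 0 0.
Proof. intros Hi. assert (Hin : (1 <= i <= n)%nat) by (unfold mm in Hi; lia).
  assert (Hnu := nu_gt i ltac:(lia)).
  eapply lim_ext. intros s Ds. symmetry.
  assert (E : (scale s * W s) / cc d n s i = W s * Rpower s (nu d n - sig i) * / Mp).
  { rewrite cc_eq by auto. unfold scale, Rminus. rewrite Rpower_plus, Rpower_Ropp.
    assert (A := Rpower_pos MM (/ dr 1)). assert (B := Rpower_pos s (sig i)).
    unfold Mp. field. lra. }
  unfold ypow. rewrite E. reflexivity.
  eapply lim_val. apply lim_pow, limit_mul, lim_const. apply limit_mul. apply HW.
  apply lim_Rpower0; auto. lra.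
  rewrite (Dd_S i Hi). simpl. ring. Qed.

Lemma lim_XS : limit1_in (fun s => XS s (W s)) D 0 0.
Proof. unfold XS. eapply lim_val. apply lim_sumR with (l := fun _ => 0).
  - intros i Hi. eapply lim_val. apply limit_mul. apply limit_mul. apply lim_const.
    apply lim_ypow; auto. apply limit_inv. eapply limit_minus. apply lim_ypow; auto.
    apply lim_const. lra. field.
  - apply sumR_zero. Qed.

Lemma lim_Pnorm : limit1_in (fun s => Pnorm s (W s)) D 1 0.
Proof. unfold Pnorm. eapply lim_val. apply lim_prodR with (l := fun _ => 1).
  - intros i Hi. unfold pfactor.
    assert (L : limit1_in (fun s => 1 - ypow s (W s) i) D 1 0).
    { eapply lim_val. apply limit_minus. apply lim_const. apply lim_ypow; auto. ring. }
    destruct (Nat.odd i); [|exact L].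
    eapply lim_val. apply limit_inv. apply L. lra. apply Rinv_1.
  - apply prodR_one. Qed.

Lemma lim_Psi : limit1_in (fun s => Psi s (W s)) D (Kc * (dr 1 * dr n * w0 ^ dn1 - Kc)) 0.
Proof. unfold Psi, Gdenom. eapply lim_val.
  apply limit_minus.
  apply limit_mul; [| apply lim_Pnorm].
  apply limit_mul; [| apply lim_const].
  apply limit_mul; [| apply lim_pow, HW].
  apply limit_mul; [| apply limit_minus; [apply lim_XS | apply lim_const]].
  apply limit_mul; [| apply lim_L1].
  apply limit_mul; [| apply lim_G1].
  apply lim_pow. apply limit_minus. apply limit_mul. apply lim_scale. apply HW. apply lim_const.
  apply lim_pow. apply limit_minus.
  apply limit_mul; [| apply lim_pow, HW].
  apply limit_mul; [apply lim_G1 | apply limit_mul; [apply lim_scale | apply HW]].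
  apply limit_mul; [apply lim_const | apply lim_Pnorm].
  ring. Qed.

Hypothesis HWpos : forall s, D s -> 0 < W s.
Hypothesis Hw0 : 0 < w0.

Lemma lim_Sf : limit1_in (fun s => Sf s (W s) / scale s) D (w0 * w0 ^ dn1 / Kc) 0.
Proof. assert (HK : 0 < Kc) by apply Rpower_pos.
  assert (Hw0p : 0 < w0 ^ dn1) by (apply pow_lt; lra).
  assert (E : forall s, D s -> (scale s * W s - 1) /
      (scale s * G1 s - Kc * Pnorm s (W s) / (W s * W s ^ dn1)) = Sf s (W s) / scale s).
  { intros s Ds. assert (Hw := HWpos s Ds). assert (He := scale_pos s).
    assert (Hwp : 0 < W s ^ dn1) by (apply pow_lt; lra).
    unfold Sf, Rdiv. rewrite Gz_eq, (Rmult_assoc (scale s * W s - 1)), <- Rinv_mult by auto.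
    do 2 f_equal. field. repeat split; lra. }
  apply (lim_ext _ _ D _ _ E). eapply lim_val. apply limit_mul.
  - apply limit_minus. apply limit_mul. apply lim_scale. apply HW. apply lim_const.
  - apply limit_inv. apply limit_minus. apply limit_mul. apply lim_scale. apply lim_G1.
    apply limit_mul. apply limit_mul. apply lim_const. apply lim_Pnorm.
    apply limit_inv. apply limit_mul. apply HW. apply lim_pow, HW.
    + nra.
    + assert (0 < / (w0 * w0 ^ dn1)) by (apply Rinv_0_lt_compat; nra). nra.
  - field. split; lra. Qed.

Lemma lim_Tf : limit1_in (fun s => Tf s (W s) / scale s) D (w0 - w0 * w0 ^ dn1 / Kc) 0.
Proof. eapply lim_ext. intros s Ds. symmetry.
  assert (He := scale_pos s). unfold Tf.
  replace ((scale s * W s - Sf s (W s) * G1 s) / scale s)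
    with (W s - Sf s (W s) / scale s * G1 s) by (field; lra). reflexivity.
  eapply lim_val. apply limit_minus. apply HW. apply limit_mul. apply lim_Sf. apply lim_G1.
  ring. Qed.

Lemma lim_z0 : limit1_in (fun s => scale s * W s / scale s) D w0 0.
Proof. eapply lim_ext. 2: apply HW. intros s Ds. assert (He := scale_pos s). field. lra. Qed.
End Limits.

Section Continuity.
Variable s : R.
Variable w1 : R.
Hypothesis Hy1 : forall i, (1 <= i <= mm)%nat -> ypow s w1 i < 1.
Variable D : R -> Prop.

Lemma cont_ypow i : limit1_in (fun w => ypow s w i) D (ypow s w1 i) w1.
Proof. unfold ypow. apply lim_pow. apply limit_mul. apply limit_mul. apply lim_const. apply lim_id.
  apply lim_const. Qed.

Lemma cont_XS : limit1_in (fun w => XS s w) D (XS s w1) w1.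
Proof. unfold XS. apply lim_sumR. intros i Hi. apply limit_mul. apply limit_mul. apply lim_const.
  apply cont_ypow. apply limit_inv. apply limit_minus. apply cont_ypow. apply lim_const.
  specialize (Hy1 i Hi). lra. Qed.

Lemma cont_Pnorm : limit1_in (fun w => Pnorm s w) D (Pnorm s w1) w1.
Proof. unfold Pnorm. apply lim_prodR. intros i Hi. unfold pfactor. specialize (Hy1 i Hi).
  assert (L : limit1_in (fun w => 1 - ypow s w i) D (1 - ypow s w1 i) w1).
  { apply limit_minus. apply lim_const. apply cont_ypow. }
  destruct (Nat.odd i); [apply limit_inv; [exact L | lra] | exact L]. Qed.

Lemma cont_Psi : limit1_in (fun w => Psi s w) D (Psi s w1) w1.
Proof. unfold Psi, Gdenom. apply limit_minus.
  apply limit_mul; [| apply cont_Pnorm].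
  apply limit_mul; [| apply lim_const].
  apply limit_mul; [| apply lim_pow, lim_id].
  apply limit_mul; [| apply limit_minus; [apply cont_XS | apply lim_const]].
  apply limit_mul; [| apply lim_const].
  apply limit_mul; [| apply lim_const].
  apply lim_pow. apply limit_minus. apply limit_mul. apply lim_const. apply lim_id. apply lim_const.
  apply lim_pow. apply limit_minus.
  apply limit_mul; [| apply lim_pow, lim_id].
  apply limit_mul; [apply lim_const | apply limit_mul; [apply lim_const | apply lim_id]].
  apply limit_mul; [apply lim_const | apply cont_Pnorm]. Qed.
End Continuity.

Lemma ypow_mono s w w' i : 0 < s -> (1 <= i <= mm)%nat -> 0 <= w <= w' ->
  0 <= ypow s w i <= ypow s w' i.
Proof. intros Hs Hi Hw. assert (Hc := cc_pos s i Hs ltac:(unfold mm in Hi; lia)).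
  assert (He := scale_pos s).
  assert (Hq : 0 <= scale s * w / cc d n s i).
  { unfold Rdiv. apply Rmult_le_pos. nra. left; apply Rinv_0_lt_compat; lra. }
  unfold ypow. split. apply pow_le, Hq.
  apply pow_incr. split. exact Hq.
  unfold Rdiv. apply Rmult_le_compat_r. left; apply Rinv_0_lt_compat; lra. nra. Qed.

Lemma ypow_below s w2 : 0 < s -> sumR (fun i => ypow s w2 i) mm < 1 ->
  forall w i, 0 <= w <= w2 -> (1 <= i <= mm)%nat -> 0 <= ypow s w i < 1.
Proof. intros Hs Hsum w i Hw Hi. destruct (ypow_mono s w w2 i Hs Hi Hw) as [Y1 Y2].
  assert (ypow s w2 i <= sumR (fun i => ypow s w2 i) mm).
  { apply sumR_term_le; auto. intros j Hj. apply (ypow_mono s w2 w2 j Hs Hj). lra. }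
  lra. Qed.

Lemma cpow_ne1 s : 0 < s -> sumR (fun i => cc d n s i ^ Dd d i) mm < 1 ->
  forall i, (1 <= i <= mm)%nat -> 1 - cc d n s i ^ Dd d i <> 0.
Proof. intros Hs Hsum i Hi.
  assert (Hpos : forall j, (1 <= j <= mm)%nat -> 0 <= cc d n s j ^ Dd d j).
  { intros j Hj. apply pow_le. left; apply cc_pos; auto. unfold mm in Hj; lia. }
  assert (H := sumR_term_le _ mm i Hpos Hi). lra. Qed.

Lemma Psi_root s w1 w2 : 0 < s -> 0 < w1 < w2 -> sumR (fun i => ypow s w2 i) mm < 1 ->
  Psi s w1 < 0 -> 0 < Psi s w2 -> exists w, w1 <= w <= w2 /\ Psi s w = 0.
Proof. intros Hs Hw Hsum H1 H2.
  destruct (Ranalysis5.IVT_interv (Psi s) w1 w2) as [z [Hz HPz]]; [| lra | exact H1 | exact H2 |].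
  - intros a Ha. apply (cont_Psi s a). intros i Hi. apply (ypow_below s w2 Hs Hsum a i); auto. lra.
  - exists z. auto. Qed.

(* For small s the denominator [Gdenom] stays away from 0 on [0, w2]: the first term
   is O(s^nu) while Kc Pnorm stays near Kc. *)
Lemma Gdenom_nonzero s w2 z : 0 < s -> 0 <= z <= w2 ->
  sumR (fun i => ypow s w2 i) mm < 1 -> 0 < G1 s ->
  G1 s * (scale s * w2) * w2 ^ dn1 < Kc / 2 ->
  1 / 2 < prodR (fun i => 1 - ypow s w2 i) mm -> Gdenom s z <> 0.
Proof. intros Hs Hz Hsum HG Hsmall Hprod.
  assert (HK : 0 < Kc) by apply Rpower_pos. assert (He := scale_pos s).
  assert (Hyb := ypow_below s w2 Hs Hsum).
  assert (HPn : prodR (fun i => 1 - ypow s w2 i) mm <= Pnorm s z).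
  { apply prodR_le. intros i Hi. destruct (Hyb z i ltac:(lra) Hi) as [Z1 Z2].
    destruct (Hyb w2 i ltac:(lra) Hi) as [W1 W2].
    destruct (ypow_mono s z w2 i Hs Hi ltac:(lra)) as [_ M]. unfold pfactor.
    split. lra. destruct (Nat.odd i); [|lra].
    assert (1 <= / (1 - ypow s z i)) by (rewrite <- Rinv_1; apply Rinv_le_contravar; lra).
    lra. }
  assert (HV : G1 s * (scale s * z) * z ^ dn1 <= G1 s * (scale s * w2) * w2 ^ dn1).
  { apply Rmult_le_compat. apply Rmult_le_pos; [lra|]. nra. apply pow_le; lra.
    apply Rmult_le_compat_l. lra. apply Rmult_le_compat_l; lra.
    apply pow_incr; lra. }
  unfold Gdenom. intro H. nra. Qed.

Lemma wstar_pos : 0 < wstar.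
Proof. unfold wstar, mu. assert (A := dr_ge2 1 ltac:(lia)). assert (B := dr_ge2 n ltac:(lia)).
  unfold dr in *. repeat apply Rmult_lt_0_compat; try lra; apply Rpower_pos. Qed.

(* wstar is the root of the limiting multiplier equation d_1 d_n w^(d_n-1) = Kc. *)
Lemma wstar_pow : wstar ^ dn1 = Kc / (dr 1 * dr n).
Proof. assert (A := dr_ge2 1 ltac:(lia)). assert (B := dr_ge2 n ltac:(lia)).
  assert (HA : 0 < dr 1 * dr n) by nra. assert (HX := dmax_pos).
  assert (Hn1 : dr n - 1 <> 0) by lra.
  rewrite <- Rpower_pow by apply wstar_pos. rewrite INR_dn1.
  assert (E : wstar = Rpower (dr 1 * dr n) (1 - dr n / (dr n - 1)) *
     Rpower (INR (dmax d n)) (2 * (dr n - dr 1) / (dr 1 * (dr n - 1)))).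
  { replace (1 - dr n / (dr n - 1)) with (1 + - (dr n / (dr n - 1))) by ring.
    rewrite Rpower_plus, Rpower_1 by auto. unfold wstar, mu, dr. ring. }
  rewrite E. rewrite <- Rpower_mult_distr by apply Rpower_pos. rewrite !Rpower_mult.
  unfold Kc, MM. rewrite <- (Rpower_pow 2) by auto. rewrite Rpower_mult.
  replace ((1 - dr n / (dr n - 1)) * (dr n - 1)) with (Ropp 1) by (field; auto).
  rewrite Rpower_Ropp, Rpower_1 by auto. unfold Rdiv. rewrite Rmult_comm. f_equal. f_equal.
  simpl. field. split; lra. Qed.

Lemma Psi_limit_sign w : 0 < w ->
  (w < wstar -> Kc * (dr 1 * dr n * w ^ dn1 - Kc) < 0) /\
  (wstar < w -> 0 < Kc * (dr 1 * dr n * w ^ dn1 - Kc)).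
Proof. intros Hw. assert (HK : 0 < Kc) by apply Rpower_pos. assert (Hs := wstar_pos).
  assert (P1 := dr_ge2 1 ltac:(lia)). assert (P2 := dr_ge2 n ltac:(lia)).
  assert (Hd : 0 < dr 1 * dr n) by nra.
  assert (EK : dr 1 * dr n * wstar ^ dn1 = Kc) by (rewrite wstar_pow; field; lra).
  assert (Hp : (1 <= dn1)%nat) by (unfold dn1; assert (A := hd2 n ltac:(lia)); lia).
  assert (Mono : forall a b, 0 < a < b -> a ^ dn1 < b ^ dn1).
  { intros a b Hab. rewrite <- !Rpower_pow by lra. apply Rlt_Rpower_l; [|lra].
    apply lt_0_INR. lia. }
  split; intros Hlt.
  - assert (H := Mono w wstar ltac:(lra)).
    assert (dr 1 * dr n * w ^ dn1 < Kc) by (rewrite <- EK; apply Rmult_lt_compat_l; lra).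
    assert (0 < Kc * (Kc - dr 1 * dr n * w ^ dn1)) by (apply Rmult_lt_0_compat; lra). lra.
  - assert (H := Mono wstar w ltac:(lra)).
    assert (Kc < dr 1 * dr n * w ^ dn1) by (rewrite <- EK; apply Rmult_lt_compat_l; lra).
    apply Rmult_lt_0_compat; lra. Qed.

Definition Controlled (w2 s : R) : Prop :=
  sumR (fun i => ypow s w2 i) mm < 1 /\
  sumR (fun i => cc d n s i ^ Dd d i) mm < 1 /\
  0 < G1 s /\
  G1 s * (scale s * w2) * w2 ^ dn1 < Kc / 2 /\
  1 / 2 < prodR (fun i => 1 - ypow s w2 i) mm.

Lemma controlled_near0 w2 : near0 (Controlled w2).
Proof.
  pose (D := fun s : R => 0 < s). assert (HD : forall s, D s -> 0 < s) by auto.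
  assert (HK : 0 < Kc) by apply Rpower_pos. assert (L2 := lim_const w2 D 0).
  assert (Hy : near0 (fun s => sumR (fun i => ypow s w2 i) mm < 1)).
  { apply near0_lt with (l := 0); [|lra]. eapply lim_val.
    apply lim_sumR with (l := fun _ => 0). intros i Hi. exact (lim_ypow D HD _ _ L2 i Hi).
    apply sumR_zero. }
  assert (Hc : near0 (fun s => sumR (fun i => cc d n s i ^ Dd d i) mm < 1)).
  { apply near0_lt with (l := 0); [|lra]. eapply lim_val.
    apply lim_sumR with (l := fun _ => 0). intros i Hi. exact (lim_cpow D HD i Hi).
    apply sumR_zero. }
  assert (HG := near0_gt _ _ 0 (lim_G1 D HD) ltac:(lra)).
  assert (Hsmall : near0 (fun s => G1 s * (scale s * w2) * w2 ^ dn1 < Kc / 2)).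
  { apply near0_lt with (l := 0); [|lra]. eapply lim_val.
    apply limit_mul; [apply limit_mul; [apply (lim_G1 D HD) |] | apply lim_const].
    apply limit_mul; [apply (lim_scale D HD) | apply lim_const]. ring. }
  assert (Hprod : near0 (fun s => 1 / 2 < prodR (fun i => 1 - ypow s w2 i) mm)).
  { apply near0_gt with (l := 1); [|lra]. eapply lim_val.
    apply lim_prodR with (l := fun _ => 1). intros i Hi. eapply lim_val.
    apply limit_minus. apply lim_const. exact (lim_ypow D HD _ _ L2 i Hi). ring.
    apply prodR_one. }
  exact (near0_and _ _ Hy (near0_and _ _ Hc (near0_and _ _ HG
    (near0_and _ _ Hsmall Hprod)))).
Qed.

Lemma parabolic_in_interval s w1 w2 : 0 < s -> 0 < w1 < w2 -> Controlled w2 s ->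
  Psi s w1 < 0 -> 0 < Psi s w2 -> exists w, w1 <= w <= w2 /\ ParabolicOrbit s w.
Proof. intros Hs Hw [Ys [Cs [Gs [Ss Ps]]]] Ns Qs.
  destruct (Psi_root s w1 w2 Hs Hw Ys Ns Qs) as [w [Hw' Hroot]].
  exists w. split; [exact Hw'|]. apply parabolic_of_root; auto; [lra | | |].
  - intros i Hi. apply (ypow_below s w2 Hs Ys w i); auto. lra.
  - apply cpow_ne1; auto.
  - apply (Gdenom_nonzero s w2); auto. lra. Qed.

(* Main step: for w1 < wstar < w2 and all small s > 0, [Psi s] changes sign on
   [w1, w2] (its limits do) while staying under control. *)
Lemma roots_near_wstar w1 w2 : 0 < w1 < wstar -> wstar < w2 ->
  near0 (fun s => exists w, w1 <= w <= w2 /\ ParabolicOrbit s w).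
Proof. intros Hw1 Hw2.
  pose (D := fun s : R => 0 < s). assert (HD : forall s, D s -> 0 < s) by auto.
  assert (Hneg := near0_lt _ _ 0 (lim_Psi D HD _ _ (lim_const w1 D 0))
    (proj1 (Psi_limit_sign w1 ltac:(lra)) ltac:(lra))).
  assert (Hpos := near0_gt _ _ 0 (lim_Psi D HD _ _ (lim_const w2 D 0))
    (proj2 (Psi_limit_sign w2 ltac:(lra)) Hw2)).
  generalize (near0_and _ _ (controlled_near0 w2) (near0_and _ _ Hneg Hpos)).
  apply near0_impl. intros s Hs [Cs [Ns Qs]].
  apply parabolic_in_interval; auto; lra. Qed.

Lemma near_solutions eps : 0 < eps ->
  near0 (fun s => exists w, Rabs (w - wstar) <= eps /\ (0 < w /\ ParabolicOrbit s w)).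
Proof. intros He. assert (Hs := wstar_pos).
  assert (Hm : 0 < Rmin eps (wstar / 2)) by (apply Rmin_pos; lra).
  assert (Hm1 := Rmin_l eps (wstar / 2)). assert (Hm2 := Rmin_r eps (wstar / 2)).
  apply near0_impl with (2 := roots_near_wstar (wstar - Rmin eps (wstar / 2)) (wstar + eps)
    ltac:(lra) ltac:(lra)).
  intros s _ [w [Hw Hp]]. exists w. split; [apply Rabs_le; lra | split; [lra | exact Hp]]. Qed.

(* The limit of S/s^nu, expressed through wstar, is mu. *)
Lemma mu_eq : wstar * wstar ^ dn1 / Kc = mu d n.
Proof. rewrite wstar_pow. unfold wstar. assert (HK : 0 < Kc) by apply Rpower_pos.
  assert (P1 := dr_ge2 1 ltac:(lia)). assert (P2 := dr_ge2 n ltac:(lia)). field. split; lra. Qed.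

Theorem parabolic_orbit :
  exists s0 : R, 0 < s0 /\
  exists (Sn Tn z0 : R -> R),
    (forall s, 0 < s < s0 ->
       Rn d n s (Sn s) (Tn s) 1 = z0 s /\
       Rn d n s (Sn s) (Tn s) (z0 s) = 1 /\
       exists l1 l2 : R,
         derivable_pt_lim (fun z => Rn d n s (Sn s) (Tn s) z) 1 l1 /\
         derivable_pt_lim (fun z => Rn d n s (Sn s) (Tn s) z) (z0 s) l2 /\
         l1 * l2 = 1) /\
    limit1_in (fun s => Sn s / Rpower s (nu d n)) (fun s => 0 < s < s0)
      (mu d n) 0 /\
    limit1_in (fun s => Tn s / Rpower s (nu d n)) (fun s => 0 < s < s0)
      ((INR (d 1%nat) * INR (d n) - 1) * mu d n) 0 /\
    limit1_in (fun s => z0 s / Rpower s (nu d n)) (fun s => 0 < s < s0)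
      (INR (d 1%nat) * INR (d n) * mu d n) 0.
Proof.
  destruct (select_converging (fun s w => 0 < w /\ ParabolicOrbit s w) wstar near_solutions)
    as [s0 [Hs0 [W [HW LW]]]].
  exists s0. split; [exact Hs0|].
  exists (fun s => Sf s (W s)), (fun s => Tf s (W s)), (fun s => scale s * W s).
  assert (HD : forall s, 0 < s < s0 -> 0 < s) by (intros s [A _]; exact A).
  assert (Hpos : forall s, 0 < s < s0 -> 0 < W s) by (intros s Hs; apply HW, Hs).
  assert (Hw := wstar_pos).
  split; [|split; [|split]].
  - intros s Hs. exact (proj2 (HW s Hs)).
  - rewrite <- mu_eq. exact (lim_Sf _ HD W wstar LW Hpos Hw).
  - eapply lim_val. exact (lim_Tf _ HD W wstar LW Hpos Hw).
    rewrite mu_eq. unfold wstar, dr. ring.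
  - exact (lim_z0 _ W wstar LW).
Qed.
End Orbit.

(* d_i >= 2 for every i, since a term 1/d_i = 1 would already exhaust the sum. *)
Lemma d_ge2 (n : nat) (d : nat -> nat) :
  (forall i, (1 <= i <= n)%nat -> (1 <= d i)%nat) -> sumR (fun i => / INR (d i)) n < 1 ->
  forall i, (1 <= i <= n)%nat -> (2 <= d i)%nat.
Proof. intros hdpos hsum i Hi.
  destruct (Nat.eq_dec (d i) 1) as [E|E]; [|specialize (hdpos i Hi); lia].
  exfalso. assert (H := sumR_term_le (fun i => / INR (d i)) n i).
  cbv beta in H. rewrite E in H. change (INR 1) with 1 in H. rewrite Rinv_1 in H.
  assert (1 <= sumR (fun i => / INR (d i)) n); [|lra]. apply H; auto.
  intros j Hj. left. apply Rinv_0_lt_compat, lt_0_INR. specialize (hdpos j Hj). lia. Qed.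

Theorem lemma4p1 (n : nat) (d : nat -> nat)
  (hn3 : (3 <= n)%nat) (hnodd : Nat.odd n = true)
  (hdpos : forall i, (1 <= i <= n)%nat -> (1 <= d i)%nat)
  (hsum : sumR (fun i => / INR (d i)) n < 1) :
  exists s0 : R, 0 < s0 /\
  exists (Sn Tn z0 : R -> R),
    (forall s, 0 < s < s0 ->
       Rn d n s (Sn s) (Tn s) 1 = z0 s /\
       Rn d n s (Sn s) (Tn s) (z0 s) = 1 /\
       exists l1 l2 : R,
         derivable_pt_lim (fun z => Rn d n s (Sn s) (Tn s) z) 1 l1 /\
         derivable_pt_lim (fun z => Rn d n s (Sn s) (Tn s) z) (z0 s) l2 /\
         l1 * l2 = 1) /\
    limit1_in (fun s => Sn s / Rpower s (nu d n)) (fun s => 0 < s < s0)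
      (mu d n) 0 /\
    limit1_in (fun s => Tn s / Rpower s (nu d n)) (fun s => 0 < s < s0)
      ((INR (d 1%nat) * INR (d n) - 1) * mu d n) 0 /\
    limit1_in (fun s => z0 s / Rpower s (nu d n)) (fun s => 0 < s < s0)
      (INR (d 1%nat) * INR (d n) * mu d n) 0.
Proof.
  destruct (proj1 (Nat.odd_spec n) hnodd) as [k Hk].
  apply (parabolic_orbit d n k); [lia | lia | exact (d_ge2 n d hdpos hsum)].
Qed.
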